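(* Let $E_1|H_1$, $E_2|H_2$, $E_3|H_3$ be conditional events such that $\{E_1|H_1,E_2|H_2\}$ is p-consistent. Then $\{E_1|H_1,E_2|H_2\}$ p-entails $E_3|H_3$ if and only if $(E_3|H_3)\,|\,\big((E_1|H_1)\wedge(E_2|H_2)\big)=1$. *)

From HB Require Import structures.
From mathcomp Require Import all_boot all_order all_algebra.
Set Implicit Arguments. Unset Strict Implicit. Unset Printing Implicit Defensive.
Import Order.TTheory GRing.Theory Num.Theory.
Local Open Scope ring_scope.

(* Coherence (betting scheme) of a prevision assessment [mu] on a finite
   family, indexed by the elements of [D], of conditional random quantities
   X_i | K_i (values X i w on the constituents w of K i).  For every vector of
   stakes s, the random gain G = sum_i s_i K_i (X_i - mu_i), restricted to the
   disjunction of the conditioning events of the quantities actually bet on,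
   must have min <= 0 <= max.  (Quantifying over the support of s is the same
   as quantifying over all subfamilies.)  Conditioning events are nonempty. *)
Definition coherent (R : realFieldType) (I T : finType) (D : {set I})
  (X : I -> T -> R) (K : I -> {set T}) (mu : I -> R) : Prop :=
  (forall i, i \in D -> K i != set0) /\
  forall s : I -> R,
    let Hs := \bigcup_(i in D | s i != 0) K i in
    let G := fun w => \sum_(i in D) s i * ((w \in K i)%:R * (X i w - mu i)) in
    Hs != set0 ->
    (exists2 w, w \in Hs & G w <= 0) /\ (exists2 w, w \in Hs & 0 <= G w).

(* Three conditional events E i | H i, i : 'I_3 (index 0,1,2 = paper's 1,2,3).
   p S is the prevision of the conjunction C_S of the conditional events in S
   (for S = [set i], p S = P(E i | H i)). *)
Definition conjv (R : nzRingType) (T : finType) (E H : 'I_3 -> {set T})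
  (p : {set 'I_3} -> R) (S : {set 'I_3}) (w : T) : R :=
  if [exists i in S, (w \in H i) && (w \notin E i)] then 0
  else if [set i in S | w \notin H i] == set0 then 1
  else p [set i in S | w \notin H i].

Definition conjcond (T : finType) (H : 'I_3 -> {set T}) (S : {set 'I_3}) : {set T} :=
  \bigcup_(i in S) H i.

Definition F12 : {set 'I_3} := [set i | i != ord_max].

Definition ce_coherent (R : realFieldType) (T : finType) (E H : 'I_3 -> {set T})
  (F : {set 'I_3}) (p : {set 'I_3} -> R) : Prop :=
  coherent [set [set i] | i in F] (conjv E H p) (conjcond H) p.

Definition p_consistent (R : realFieldType) (T : finType) (E H : 'I_3 -> {set T})
  (F : {set 'I_3}) : Prop :=
  ce_coherent E H F (fun _ => 1 : R).

Definition p_entails (R : realFieldType) (T : finType) (E H : 'I_3 -> {set T})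
  (F : {set 'I_3}) (j : 'I_3) : Prop :=
  p_consistent R E H F /\
  forall p : {set 'I_3} -> R, ce_coherent E H (j |: F) p ->
    (forall i, i \in F -> p [set i] = 1) -> p [set j] = 1.

(* Full assessment for the iterated conditional (E3|H3)|((E1|H1)/\(E2|H2)):
   a (Some S) = prevision of the conjunction C_S (S nonempty),
   a None     = mu = prevision of the iterated conditional. *)
Definition iterv (R : nzRingType) (T : finType) (E H : 'I_3 -> {set T})
  (a : option {set 'I_3} -> R) (w : T) : R :=
  conjv E H (fun S => a (Some S)) setT w
  + a None * (1 - conjv E H (fun S => a (Some S)) F12 w).

Definition itfam_val (R : nzRingType) (T : finType) (E H : 'I_3 -> {set T})
  (a : option {set 'I_3} -> R) (o : option {set 'I_3}) (w : T) : R :=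
  match o with
  | Some S0 => conjv E H (fun S => a (Some S)) S0 w
  | None => iterv E H a w
  end.

(* conditioning events; the bet on the iterated conditional is called off
   where the conditioning conjunction C12 has value 0 (there the iterated
   conditional is equal to its prevision mu). *)
Definition itfam_cond (R : nzRingType) (T : finType) (E H : 'I_3 -> {set T})
  (a : option {set 'I_3} -> R) (o : option {set 'I_3}) : {set T} :=
  match o with
  | Some S0 => conjcond H S0
  | None => [set w in conjcond H setT | conjv E H (fun S => a (Some S)) F12 w != 0]
  end.

Definition itfam_dom : {set option {set 'I_3}} :=
  [set o | if o is Some S0 then S0 != set0 else true].

(* (E3|H3) | ((E1|H1) /\ (E2|H2)) = 1 : for every coherent assessment of the
   family of all conjunctions and of the iterated conditional, the iterated
   conditional is constantly equal to 1. *)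
Definition iterated_is_one (R : realFieldType) (T : finType) (E H : 'I_3 -> {set T}) : Prop :=
  forall a : option {set 'I_3} -> R,
    coherent itfam_dom (itfam_val E H a) (itfam_cond E H a) a ->
    forall w, iterv E H a w = 1.

(* Both sides are characterized by the same combinatorial condition on the
   constituents.  Call w a witness of a nonempty subfamily A of the three
   events if some conditioning event of A is true at w, no premise of A is
   falsified at w and, if the conclusion is in A, it is not verified at w.
   - If every nonempty subfamily has a witness, the extreme assessment
     (conjunctions containing the conclusion get prevision 0, the others 1)
     is coherent, for the conditional events as well as for the family of
     conjunctions and the iterated conditional (with prevision 0).  So
     neither p-entailment nor the iterated conditional being 1 holds.
   - Otherwise, p-consistency forces a subfamily A without witness to contain
     the conclusion: the quasi conjunction of its premises is included in
     the conclusion.  Betting on the conclusion and against these premises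
     yields p-entailment; and an induction on subfamilies shows that adding
     the conclusion to a conjunction containing these premises leaves it
     unchanged, so C123 = C12, whence the iterated conditional C123 +
     mu (1 - C12) has prevision mu = 1 and equals 1.
   The file first develops the betting scheme for general finite families of
   conditional random quantities, then the two cases, then the theorem. *)

From HB Require Import structures.
From mathcomp Require Import all_boot all_order all_algebra.
From mathcomp Require Import ring lra.
Set Implicit Arguments. Unset Strict Implicit. Unset Printing Implicit Defensive.
Import Order.TTheory GRing.Theory Num.Theory.
Local Open Scope ring_scope.

Section BettingScheme.
Variables (R : realFieldType) (I T : finType) (D : {set I}) (X : I -> T -> R)
  (K : I -> {set T}) (mu : I -> R).

Definition gain (s : I -> R) (w : T) : R :=
  \sum_(i in D) s i * ((w \in K i)%:R * (X i w - mu i)).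

Definition called_on (s : I -> R) (w : T) : Prop :=
  exists2 i, (i \in D) && (s i != 0) & w \in K i.

Definition active (s : I -> R) : Prop := exists2 j, j \in D & s j != 0.

Lemma coherent_gain_sign s : coherent D X K mu -> active s ->
  (exists2 w, called_on s w & gain s w <= 0) /\
  (exists2 w, called_on s w & 0 <= gain s w).
Proof.
move=> [condN0 coh] [j jD sj]; have [|] := coh s.
  have /set0Pn [w wK] := condN0 j jD; apply/set0Pn; exists w.
  by apply/bigcupP; exists j; rewrite ?jD.
move=> [w1 /bigcupP [i1 h1 k1] g1] [w2 /bigcupP [i2 h2 k2] g2].
by split; [exists w1 => //; exists i1 | exists w2 => //; exists i2].
Qed.

Lemma coherent_no_sure_gain s : coherent D X K mu -> active s ->
  ~ (forall w, called_on s w -> 0 < gain s w).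
Proof.
move=> coh act sure; have [[w won g] _] := coherent_gain_sign coh act.
by move: (sure w won); rewrite ltNge g.
Qed.

Lemma coherent_no_sure_loss s : coherent D X K mu -> active s ->
  ~ (forall w, called_on s w -> gain s w < 0).
Proof.
move=> coh act sure; have [_ [w won g]] := coherent_gain_sign coh act.
by move: (sure w won); rewrite ltNge g.
Qed.

Lemma coherent_certain_gain s c : coherent D X K mu -> active s ->
  (forall w, called_on s w -> gain s w = c) -> c = 0.
Proof.
move=> coh act gc; have [[w1 h1 g1] [w2 h2 g2]] := coherent_gain_sign coh act.
rewrite gc // in g1; rewrite gc // in g2.
by apply/le_anti; rewrite g1 g2.
Qed.

Lemma coherent_of_fair_constituent :
  (forall i, i \in D -> K i != set0) ->
  (forall s, active s -> exists2 w, called_on s w &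
     forall i, i \in D -> s i != 0 -> w \in K i -> X i w = mu i) ->
  coherent D X K mu.
Proof.
move=> condN0 fair; split => // s; cbv zeta.
move=> /set0Pn [w0 /bigcupP [j /andP [jD sj] _]].
have [w [i /andP [iD si] wi] Xw] := fair s (ex_intro2 _ _ j jD sj).
have g0 : gain s w = 0.
  apply: big1 => k kD; have [->|sk] := eqVneq (s k) 0; first by rewrite mul0r.
  case wk: (w \in K k); last by rewrite mul0r mulr0.
  by rewrite Xw // subrr !mulr0.
have won : w \in \bigcup_(i in D | s i != 0) K i.
  by apply/bigcupP; exists i; rewrite ?iD.
by split; exists w; rewrite // -/(gain s w) g0.
Qed.

Definition stake1 (j : I) (c : R) (i : I) : R := if i == j then c else 0.

Definition stake2 (j1 j2 : I) (c1 c2 : R) (i : I) : R :=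
  if i == j1 then c1 else if i == j2 then c2 else 0.

Lemma gain_stake1 j c w : j \in D ->
  gain (stake1 j c) w = c * ((w \in K j)%:R * (X j w - mu j)).
Proof.
move=> jD; rewrite /gain (bigD1 j) //= /stake1 eqxx big1 ?addr0 //.
by move=> i /andP [_ /negbTE ->]; rewrite mul0r.
Qed.

Lemma gain_stake2 j1 j2 c1 c2 w : j1 != j2 -> j1 \in D -> j2 \in D ->
  gain (stake2 j1 j2 c1 c2) w =
  c1 * ((w \in K j1)%:R * (X j1 w - mu j1)) + c2 * ((w \in K j2)%:R * (X j2 w - mu j2)).
Proof.
move=> ne j1D j2D; rewrite /gain (bigD1 j1) //= (bigD1 j2) /=; last by rewrite j2D eq_sym.
rewrite /stake2 eqxx eq_sym (negbTE ne) eqxx addrA big1 ?addr0 //.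
by move=> i /andP [/andP [_ /negbTE ->] /negbTE ->]; rewrite mul0r.
Qed.

Lemma called_on_stake1 j (c : R) w : called_on (stake1 j c) w -> w \in K j.
Proof.
by case=> i /andP [_]; rewrite /stake1; case: (eqVneq i j) => [-> //|_]; rewrite eqxx.
Qed.

Lemma called_on_stake2 j1 j2 (c1 c2 : R) w :
  called_on (stake2 j1 j2 c1 c2) w -> (w \in K j1) || (w \in K j2).
Proof.
case=> i /andP [_]; rewrite /stake2.
case: (eqVneq i j1) => [-> _ -> //|_].
by case: (eqVneq i j2) => [-> _ ->|_]; rewrite ?orbT ?eqxx.
Qed.

End BettingScheme.

Section ConditionalEvents.
Variables (R : realFieldType) (T : finType) (E H : 'I_3 -> {set T}).

Local Notation concl := (@ord_max 2).

Lemma premisesE i : (i \in F12) = (i != concl).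
Proof. by rewrite inE. Qed.

Lemma setU_concl_premises : concl |: F12 = setT.
Proof. by apply/setP => i; rewrite !inE; case: eqP. Qed.

Lemma conjcond1 i : conjcond H [set i] = H i.
Proof. by rewrite /conjcond big_set1. Qed.

Definition falsified (i : 'I_3) (w : T) : bool := (w \in H i) && (w \notin E i).
Definition verified (i : 'I_3) (w : T) : bool := (w \in H i) && (w \in E i).

Lemma conjv1 (p : {set 'I_3} -> R) i w : w \in H i ->
  conjv E H p [set i] w = (w \in E i)%:R.
Proof.
move=> wH; rewrite /conjv.
case: existsP => [[j /andP [/set1P -> /andP [_ /negbTE ->]]] //|noF].
have wE : w \in E i by apply/negPn/negP => wE; apply: noF; exists i; rewrite set11 wH.
rewrite wE ifT //; apply/eqP/setP => j; rewrite !inE.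
by case: eqP => // ->; rewrite wH.
Qed.

Lemma bet1E (p : {set 'I_3} -> R) i c w :
  (w \in H i)%:R * (conjv E H p [set i] w - c) = (w \in H i)%:R * ((w \in E i)%:R - c).
Proof. by case wH: (w \in H i); rewrite ?mul0r // conjv1. Qed.

Lemma bet_against_sure i w :
  - 1 * ((w \in H i)%:R * ((w \in E i)%:R - 1)) = (falsified i w)%:R :> R.
Proof. by rewrite /falsified; case: (w \in H i); case: (w \in E i) => /=; ring. Qed.

Definition ce_gain (F : {set 'I_3}) (p : {set 'I_3} -> R) (t : 'I_3 -> R) (w : T) : R :=
  \sum_(i in F) t i * ((w \in H i)%:R * ((w \in E i)%:R - p [set i])).

Definition pick1 (Z : {set 'I_3}) : 'I_3 := odflt concl [pick i in Z].

Lemma pick1_set1 i : pick1 [set i] = i.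
Proof. by rewrite /pick1; case: pickP => [j /set1P //|/(_ i)]; rewrite set11. Qed.

Lemma ce_gain_sign F p t : ce_coherent E H F p -> (exists2 i, i \in F & t i != 0) ->
  (exists2 w, [exists i in F, (t i != 0) && (w \in H i)] & ce_gain F p t w <= 0) /\
  (exists2 w, [exists i in F, (t i != 0) && (w \in H i)] & 0 <= ce_gain F p t w).
Proof.
move=> coh [j jF tj]; pose s Z := t (pick1 Z).
have gainE w :
    gain [set [set i] | i in F] (conjv E H p) (conjcond H) p s w = ce_gain F p t w.
  rewrite /gain big_imset; last by move=> ? ? _ _; apply: set1_inj.
  by apply: eq_bigr => i _; rewrite /s pick1_set1 conjcond1 bet1E.
have called w : called_on [set [set i] | i in F] (conjcond H) s w ->
    [exists i in F, (t i != 0) && (w \in H i)].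
  case=> _ /andP [/imsetP [i iF ->]]; rewrite /s pick1_set1 conjcond1 => ti wH.
  by apply/exists_inP; exists i; rewrite ?ti.
have act : active [set [set i] | i in F] s.
  by exists [set j]; rewrite ?imset_f // /s pick1_set1.
have [[w1 c1 g1] [w2 c2 g2]] := coherent_gain_sign coh act.
by split; [exists w1; rewrite -?gainE ?called | exists w2; rewrite -?gainE ?called].
Qed.

Definition witness (A : {set 'I_3}) (w : T) : bool :=
  [&& [exists i in A, w \in H i],
      [forall i in A, (i != concl) ==> ~~ falsified i w] &
      ((concl \in A) ==> ~~ verified concl w)].

Definition all_witnessed : Prop :=
  forall A : {set 'I_3}, A != set0 -> exists w, witness A w.

(* The quasi conjunction of the premises of A is included (in the sense of
   Goodman and Nguyen) in the conclusion: wherever some conditioning event of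
   A is true, a premise of A is falsified or the conclusion is verified. *)
Definition qc_included (A : {set 'I_3}) : Prop :=
  forall w, [exists i in A, w \in H i] ->
    [exists i in A, (i != concl) && falsified i w] || verified concl w.

Definition prev01 (S : {set 'I_3}) : R := if concl \in S then 0 else 1.

Definition holds01 (i : 'I_3) (w : T) : bool :=
  if i == concl then verified i w else ~~ falsified i w.

Lemma conjv_prev01 S w :
  conjv E H prev01 S w = if [forall i in S, holds01 i w] then 1 else 0.
Proof.
rewrite /conjv; case: existsP => [[i /andP [iS /andP [wH wE]]]|noF].
  rewrite ifF //; apply/negP => /forall_inP /(_ i iS).
  by rewrite /holds01 /verified /falsified wH (negbTE wE); case: eqP.
have noF' i : i \in S -> w \in H i -> w \in E i.
  by move=> iS wH; apply/negPn/negP => wE; apply: noF; exists i; rewrite iS wH.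
have -> : [forall i in S, holds01 i w] = (concl \in S) ==> (w \in H concl).
  apply/forall_inP/implyP => [h cS | h i iS].
    by have := h _ cS; rewrite /holds01 eqxx /verified => /andP [].
  rewrite /holds01 /verified /falsified; case: eqP => [ei|_].
    by rewrite ei in iS *; have wH := h iS; rewrite wH noF'.
  by apply/negP => /andP [wH /negP]; apply; apply: noF'.
case: ifP => [/eqP void|_]; last first.
  by rewrite /prev01 inE; case: (concl \in S); case: (w \in H concl).
suff -> : (concl \in S) ==> (w \in H concl) by [].
apply/implyP => cS; apply/negPn/negP => wH.
have : concl \in [set i in S | w \notin H i] by rewrite inE cS wH.
by rewrite void inE.
Qed.

Lemma witness_conjv_prev01 (A S : {set 'I_3}) w : witness A w -> S \subset A ->
  conjv E H prev01 S w = prev01 S.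
Proof.
move=> /and3P [_ /forall_inP noF /implyP noV] /subsetP sSA.
rewrite conjv_prev01 /prev01; case cS: (concl \in S).
  rewrite ifF //; apply/negP => /forall_inP /(_ _ cS).
  by rewrite /holds01 eqxx; apply/negP/noV/sSA.
rewrite ifT //; apply/forall_inP => i iS; rewrite /holds01.
case: eqP => [ei|_]; first by rewrite ei cS in iS.
by have := noF _ (sSA _ iS); case: eqP => // ei; rewrite ei cS in iS.
Qed.

(* p-consistency of the premises: every nonempty family of premises has a
   witness (betting against all of them must not be a sure gain). *)
Lemma premises_witnessed (A : {set 'I_3}) : p_consistent R E H F12 ->
  A \subset F12 -> A != set0 -> exists w, witness A w.
Proof.
move=> pc /subsetP sA /set0Pn [i0 i0A].
pose t i : R := if i \in A then -1 else 0.
have termE w i : t i * ((w \in H i)%:R * ((w \in E i)%:R - 1)) =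
    (if i \in A then falsified i w else false)%:R.
  by rewrite /t; case: (i \in A); rewrite ?bet_against_sure ?mul0r.
have act : exists2 i, i \in F12 & t i != 0.
  by exists i0; rewrite ?sA // /t i0A oppr_eq0 oner_eq0.
have [[w /exists_inP [i iF /andP [ti wH]]] g _] := ce_gain_sign pc act.
have iA : i \in A by move: ti; rewrite /t; case: (i \in A); rewrite ?eqxx.
exists w; apply/and3P; split.
- by apply/exists_inP; exists i.
- apply/forall_inP => k kA; apply/implyP => _; apply/negP => Fk.
  move: g; apply/negP; rewrite -ltNge /ce_gain (bigD1 k) ?sA //= termE kA Fk.
  apply: (lt_le_trans ltr01); rewrite lerDl.
  by apply: sumr_ge0 => j _; rewrite termE ler0n.
- by apply/implyP => cA; move: (sA _ cA); rewrite premisesE eqxx.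
Qed.

Section AllWitnessed.
Hypothesis condN0 : forall i, H i != set0.
Hypothesis wit : all_witnessed.

(* Any bet is fair at a witness of the subfamily of the events bet on. *)
Lemma prev01_coherent : ce_coherent E H (concl |: F12) prev01.
Proof.
rewrite /ce_coherent setU_concl_premises; apply: coherent_of_fair_constituent.
  by move=> _ /imsetP [i _ ->]; rewrite conjcond1.
move=> s [_ /imsetP [i0 _ ->] si0].
have [|w wA] := @wit [set i | s [set i] != 0].
  by apply/set0Pn; exists i0; rewrite inE.
have /and3P [/exists_inP [i iA wH] _ _] := wA.
exists w; first by exists [set i]; rewrite ?imset_f ?conjcond1 //; rewrite inE in iA.
move=> _ /imsetP [k _ ->] sk _.
by rewrite (witness_conjv_prev01 wA) // sub1set inE.
Qed.

Lemma not_p_entails : ~ p_entails R E H F12 concl.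
Proof.
move=> [_ pent].
have : prev01 [set concl] = 1.
  apply: pent prev01_coherent _ => i.
  by rewrite premisesE /prev01 in_set1 eq_sym => /negbTE ->.
by rewrite /prev01 set11 => /eqP; rewrite eq_sym oner_eq0.
Qed.

Definition iter01 (o : option {set 'I_3}) : R := if o is Some Z then prev01 Z else 0.

Lemma witness_iter01 w : witness setT w ->
  w \in itfam_cond E H iter01 None /\ iterv E H iter01 w = 0.
Proof.
move=> wT; have /and3P [/exists_inP [i _ wH] _ _] := wT.
rewrite /= /iterv inE !(witness_conjv_prev01 wT) ?subsetT //.
rewrite /prev01 premisesE eqxx in_setT oner_eq0 mul0r addr0 andbT; split => //.
by apply/bigcupP; exists i.
Qed.

(* Any bet is fair at a witness of the subfamily A of the events involved in
   it (all of them if the iterated conditional is bet on). *)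
Lemma iter01_coherent :
  coherent itfam_dom (itfam_val E H iter01) (itfam_cond E H iter01) iter01.
Proof.
apply: coherent_of_fair_constituent.
  case=> [Z|] /=; rewrite inE.
    move=> /set0Pn [i iZ]; have /set0Pn [w wH] := condN0 i; apply/set0Pn; exists w.
    by apply/bigcupP; exists i.
  move=> _; have [|w /witness_iter01 [wN _]] := @wit setT.
    by apply/set0Pn; exists ord0.
  by apply/set0Pn; exists w.
move=> s [j jD sj].
pose A := if s None != 0 then setT
          else [set i | [exists S, (s (Some S) != 0) && (i \in S)]].
have sSA S : s (Some S) != 0 -> S \subset A.
  move=> sS; rewrite /A; case: ifP => _; first exact: subsetT.
  by apply/subsetP => i iS; rewrite inE; apply/existsP; exists S; rewrite sS.
have sN_A : s None != 0 -> A = setT by rewrite /A => ->.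
have [|w wA] := @wit A.
  rewrite /A; case: ifP => [_|sN]; first by apply/set0Pn; exists ord0.
  case: j jD sj => [S|]; rewrite ?inE ?sN // => /set0Pn [i iS] sS.
  by apply/set0Pn; exists i; rewrite inE; apply/existsP; exists S; rewrite sS.
exists w.
  case sN: (s None != 0).
    by exists None; [rewrite inE sN | apply: (witness_iter01 _).1; rewrite -sN_A].
  have /and3P [/exists_inP [i] ] := wA.
  rewrite /A sN inE => /existsP [S /andP [sS iS]] wH _ _.
  exists (Some S); last by apply/bigcupP; exists i.
  by rewrite inE sS andbT; apply/set0Pn; exists i.
case=> [S|] _ sS _ /=; first by rewrite (witness_conjv_prev01 wA) ?sSA.
by rewrite (witness_iter01 _).2 // -sN_A.
Qed.

Lemma not_iterated_is_one : ~ iterated_is_one R E H.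
Proof.
move=> one; have [|w /witness_iter01 [_]] := @wit setT; first by apply/set0Pn; exists ord0.
by rewrite (one _ iter01_coherent) => /eqP; rewrite oner_eq0.
Qed.

End AllWitnessed.

Lemma ce_prev_le1 F (p : {set 'I_3} -> R) i :
  ce_coherent E H F p -> i \in F -> p [set i] <= 1.
Proof.
move=> coh iF; pose t := stake1 i (1 : R).
have act : exists2 j, j \in F & t j != 0 by exists i; rewrite // /t /stake1 eqxx oner_eq0.
have [_ [w /exists_inP [j _ /andP [tj wH]] g]] := ce_gain_sign coh act.
have ji : j = i by apply/eqP; move: tj; rewrite /t /stake1; case: (j == i); rewrite ?eqxx.
rewrite ji in wH; move: g.
have -> : ce_gain F p t w = (w \in H i)%:R * ((w \in E i)%:R - p [set i]).
  rewrite /ce_gain (bigD1 i) //= big1 ?addr0 => [|k /andP [_ /negbTE ki]].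
    by rewrite /t /stake1 eqxx mul1r.
  by rewrite /t /stake1 ki mul0r.
by rewrite wH mul1r; case: (w \in E i) => /=; lra.
Qed.

(* If the quasi conjunction of the premises of A is included in the
   conclusion, a coherent assessment giving probability 1 to the premises
   gives probability at least 1 to the conclusion: otherwise betting on the
   conclusion and against the premises of A would be a sure gain. *)
Lemma qc_prev_ge1 (A : {set 'I_3}) (p : {set 'I_3} -> R) :
  concl \in A -> qc_included A -> ce_coherent E H setT p ->
  (forall i, i \in F12 -> p [set i] = 1) ->
  1 <= p [set concl].
Proof.
move=> cA qc coh one; rewrite leNgt; apply/negP => p3_lt1.
pose t i : R := if i == concl then 1 else if i \in A then -1 else 0.
have act : exists2 j, j \in setT & t j != 0 by exists concl; rewrite // /t eqxx oner_eq0.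
have [[w /exists_inP [j _ /andP [tj wH]]] g _] := ce_gain_sign coh act.
move: g; apply/negP; rewrite -ltNge.
set bet3 := (w \in H concl)%:R * ((w \in E concl)%:R - p [set concl]).
set against := \sum_(i | i != concl) (if i \in A then falsified i w else false)%:R : R.
have gainE : ce_gain setT p t w = bet3 + against.
  rewrite /ce_gain (bigD1 concl) ?in_setT //= {1}/t eqxx mul1r; congr (_ + _).
  apply: eq_big => [i|i /andP [_ ic]]; first by rewrite in_setT.
  rewrite /t (negbTE ic) one ?premisesE //.
  by case: (i \in A); rewrite ?bet_against_sure ?mul0r.
have against_ge0 : 0 <= against by apply: sumr_ge0 => i _; rewrite ler0n.
have bet3_gt : -1 < bet3.
  by rewrite /bet3; case: (w \in H concl); case: (w \in E concl); rewrite /= ?mul0r; lra.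
have jA : j \in A.
  move: tj; rewrite /t; case: (eqVneq j concl) => [-> //|_].
  by case: (j \in A); rewrite ?eqxx.
have called : [exists i in A, w \in H i] by apply/exists_inP; exists j.
rewrite gainE; case/orP: (qc w called).
  case/exists_inP => k kA /andP [kc Fk].
  have : 1 <= against.
    rewrite /against (bigD1 k) //= kA Fk lerDl.
    by apply: sumr_ge0 => i _; rewrite ler0n.
  lra.
by case/andP=> wH3 wE3; rewrite /bet3 wH3 wE3 /= mul1r; lra.
Qed.

Lemma qc_p_entails (A : {set 'I_3}) : concl \in A -> qc_included A ->
  p_consistent R E H F12 -> p_entails R E H F12 concl.
Proof.
move=> cA qc pc; split=> // p coh one; rewrite setU_concl_premises in coh.
apply/le_anti; rewrite (qc_prev_ge1 cA qc coh one) andbT.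
exact: ce_prev_le1 coh (in_setT concl).
Qed.

Lemma void_proper S w : w \in conjcond H S -> [set i in S | w \notin H i] \proper S.
Proof.
move=> /bigcupP [i iS wH]; apply/properP; split.
  by apply/subsetP => k; rewrite inE => /andP [].
by exists i => //; rewrite inE wH andbF.
Qed.

Lemma conjcond_setU1 V w :
  (w \in conjcond H (concl |: V)) = (w \in H concl) || (w \in conjcond H V).
Proof.
apply/bigcupP/orP => [[i]|[wH|/bigcupP [i iV wH]]].
- by rewrite !inE => /orP [/eqP -> ->|iV wH]; [left|right; apply/bigcupP; exists i].
- by exists concl; rewrite ?setU11.
- by exists i; rewrite // inE iV orbT.
Qed.

Section QuasiConjunctionIncluded.
Variable a : option {set 'I_3} -> R.
Hypothesis coh : coherent itfam_dom (itfam_val E H a) (itfam_cond E H a) a.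

Local Notation prevC := (fun Z => a (Some Z)).

(* Previsions of conjunctions are nonnegative (by induction on the size,
   since a conjunction takes values 0, 1 or previsions of smaller ones). *)
Lemma conj_prev_ge0 S : S != set0 -> 0 <= a (Some S).
Proof.
elim: {S}#|S| {-2}S (leqnn #|S|) => [|n IH] S leS S0.
  by move: S0; rewrite -card_gt0; move: leS; case: #|S|.
rewrite leNgt; apply/negP => lt0; pose s := stake1 (Some S) (1 : R).
apply: (coherent_no_sure_gain (s := s) coh).
  by exists (Some S); rewrite ?inE // /s /stake1 eqxx oner_eq0.
move=> w [o /andP [oD so] wo].
have eo : o = Some S.
  by apply/eqP; move: so; rewrite /s /stake1; case: (o == _); rewrite ?eqxx.
rewrite eo /= in wo; rewrite gain_stake1 ?inE // mul1r /= wo mul1r.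
suff : 0 <= conjv E H prevC S w by lra.
rewrite /conjv; case: ifP => _ //; case: ifP => [_|/negbT U0]; first exact: ler01.
apply: IH U0; rewrite -ltnS; apply: leq_trans leS.
exact: proper_card (void_proper wo).
Qed.

Lemma conjv_ge0 S w : 0 <= conjv E H prevC S w.
Proof.
rewrite /conjv; case: ifP => _ //.
by case: ifP => [_|/negbT U0]; [exact: ler01 | exact: conj_prev_ge0].
Qed.

Variable A : {set 'I_3}.
Hypothesis cA : concl \in A.
Hypothesis qc : qc_included A.

Definition prevC0 (U : {set 'I_3}) : R := if U == set0 then 1 else a (Some U).

Definition has_premises (V : {set 'I_3}) : Prop :=
  forall i, i \in A -> i != concl -> i \in V.

Lemma conjv_setU1_concl (V : {set 'I_3}) (w : T) :
  concl \notin V -> has_premises V ->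
  (w \notin H concl -> has_premises [set i in V | w \notin H i] ->
     a (Some (concl |: [set i in V | w \notin H i])) =
     prevC0 [set i in V | w \notin H i]) ->
  conjv E H prevC (concl |: V) w = conjv E H prevC V w.
Proof.
move=> cV sV IH; rewrite /conjv.
have -> : [exists i in concl |: V, (w \in H i) && (w \notin E i)] =
          [exists i in V, (w \in H i) && (w \notin E i)].
  apply/exists_inP/exists_inP => [[i]|[i iV Fi]]; last by exists i; rewrite // inE iV orbT.
  rewrite !inE => /orP [/eqP ->|iV] Fi; last by exists i.
  have called : [exists i in A, w \in H i].
    by apply/exists_inP; exists concl => //; case/andP: Fi.
  case/orP: (qc called) => [/exists_inP [j jA /andP [jc Fj]]|/andP [_ wE]].
    by exists j => //; apply: sV.
  by case/andP: Fi => _; rewrite wE.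
case: ifP => // /negbT noF.
case wH: (w \in H concl).
  suff -> : [set i in concl |: V | w \notin H i] = [set i in V | w \notin H i] by [].
  by apply/setP => i; rewrite !inE; case: eqP => [->|_] //; rewrite wH !andbF.
have -> : [set i in concl |: V | w \notin H i] = concl |: [set i in V | w \notin H i].
  by apply/setP => i; rewrite !inE; case: eqP => [->|_] //; rewrite wH.
rewrite ifF; last by apply/negbTE/set0Pn; exists concl; rewrite setU11.
rewrite IH ?wH // => i iA ic; rewrite inE (sV _ iA ic) /=; apply/negP => wHi.
have called : [exists i in A, w \in H i] by apply/exists_inP; exists i.
case/orP: (qc called) => [/exists_inP [j jA /andP [jc Fj]]|/andP [wH' _]].
  by move/negP: noF; apply; apply/exists_inP; exists j => //; apply: sV.
by rewrite wH' in wH.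
Qed.

(* On the conclusion's conditioning event, outside that of V, all of V is
   void and (by the inclusion) the conclusion is verified: the conjunction of
   concl |: V takes the value prevC0 V. *)
Lemma conjv_setU1_concl_void (V : {set 'I_3}) w :
  concl \notin V -> has_premises V -> w \in H concl -> w \notin conjcond H V ->
  conjv E H prevC (concl |: V) w = prevC0 V.
Proof.
move=> cV sV wH wV; rewrite /conjv.
have wVi i : i \in V -> w \notin H i.
  by move=> iV; apply: contra wV => wHi; apply/bigcupP; exists i.
rewrite ifF; last first.
  apply/negbTE/exists_inP => [[i]]; rewrite !inE => /orP [/eqP ->|iV] /andP [wHi wE].
    have called : [exists i in A, w \in H i] by apply/exists_inP; exists concl.
    case/orP: (qc called) => [/exists_inP [j jA /andP [jc /andP [wHj _]]]|/andP [_ wE']].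
      by move: (wVi _ (sV _ jA jc)); rewrite wHj.
    by rewrite wE' in wE.
  by move: (wVi _ iV); rewrite wHi.
suff -> : [set i in concl |: V | w \notin H i] = V by rewrite /prevC0.
apply/setP => i; rewrite !inE; case: eqP => [->|_]; first by rewrite wH (negbTE cV).
by case iV: (i \in V); rewrite //= wVi.
Qed.

(* One induction step: the prevision of the conjunction of concl |: V is that
   of V, since betting on the first and against the second is a certain gain
   (by the two lemmas above). *)
Lemma prev_setU1_concl_step (V : {set 'I_3}) :
  (forall U : {set 'I_3}, U \proper V -> concl \notin U -> has_premises U ->
     a (Some (concl |: U)) = prevC0 U) ->
  concl \notin V -> has_premises V -> a (Some (concl |: V)) = prevC0 V.
Proof.
move=> IH cV sV.
have onV w : w \in conjcond H V -> conjv E H prevC (concl |: V) w = conjv E H prevC V w.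
  move=> wV; apply: conjv_setU1_concl => // _ sU; apply: IH => //; first exact: void_proper.
  by rewrite inE (negbTE cV).
have offV w : w \in conjcond H (concl |: V) -> w \notin conjcond H V ->
    conjv E H prevC (concl |: V) w = prevC0 V.
  by rewrite conjcond_setU1 => /orP [wH|->] // wV; apply: conjv_setU1_concl_void.
have D3V : Some (concl |: V) \in itfam_dom.
  by rewrite inE; apply/set0Pn; exists concl; rewrite setU11.
apply/eqP; rewrite eq_sym -subr_eq0; apply/eqP.
have [V0|VN0] := eqVneq V set0.
  apply: (coherent_certain_gain (s := stake1 (Some (concl |: V)) 1) coh).
    by exists (Some (concl |: V)); rewrite // /stake1 eqxx oner_eq0.
  move=> w /called_on_stake1 /= w3V; rewrite gain_stake1 //= w3V offV //.
    by rewrite /= !mul1r.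
  by rewrite V0 /conjcond big_set0 inE.
have DV : Some V \in itfam_dom by rewrite inE VN0.
have ne : Some (concl |: V) != Some V.
  by apply/eqP => [[eV]]; move: cV; rewrite -eV setU11.
apply: (coherent_certain_gain (s := stake2 (Some (concl |: V)) (Some V) 1 (-1)) coh).
  by exists (Some (concl |: V)); rewrite // /stake2 eqxx oner_eq0.
move=> w /called_on_stake2 /= wc; rewrite gain_stake2 //=.
have w3V : w \in conjcond H (concl |: V).
  by case/orP: wc; rewrite // conjcond_setU1 orbC => ->.
rewrite w3V; case wV: (w \in conjcond H V).
  by rewrite onV // /prevC0 (negbTE VN0) /=; lra.
by rewrite offV ?wV //= mul0r mulr0 addr0 !mul1r.
Qed.

Lemma prev_setU1_concl (V : {set 'I_3}) : concl \notin V -> has_premises V ->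
  a (Some (concl |: V)) = prevC0 V.
Proof.
elim: {V}#|V| {-2}V (leqnn #|V|) => [|n IH] V leV; apply: prev_setU1_concl_step => U UV.
  by move: leV; rewrite leqn0 => /eqP V0; move: (proper_card UV); rewrite V0 ltn0.
by apply: IH; rewrite -ltnS; apply: leq_trans leV; apply: proper_card.
Qed.

Lemma conjv123 w : conjv E H prevC setT w = conjv E H prevC F12 w.
Proof.
rewrite -setU_concl_premises; apply: conjv_setU1_concl; first by rewrite premisesE eqxx.
  by move=> i _; rewrite premisesE.
by move=> _ sU; apply: prev_setU1_concl => //; rewrite !inE eqxx.
Qed.

Lemma itervE w :
  iterv E H a w = conjv E H prevC F12 w + a None * (1 - conjv E H prevC F12 w).
Proof. by rewrite /iterv conjv123. Qed.

(* Betting on the iterated conditional alone gives, where the bet is called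
   on (C12 > 0), the gain C12 (1 - mu): its sign is certain, so mu = 1. *)
Lemma iterated_prev1 : a None = 1.
Proof.
pose s := stake1 (None : option {set 'I_3}) (1 : R).
have DN : None \in itfam_dom by rewrite inE.
have act : active itfam_dom s by exists None; rewrite // /s /stake1 eqxx oner_eq0.
have gainE w : called_on itfam_dom (itfam_cond E H a) s w ->
    gain itfam_dom (itfam_val E H a) (itfam_cond E H a) a s w =
    conjv E H prevC F12 w * (1 - a None) /\ 0 < conjv E H prevC F12 w.
  move=> /called_on_stake1 wN; have := wN; rewrite /= inE => /andP [_ C12N0].
  rewrite gain_stake1 // mul1r wN mul1r /= itervE; split; first by ring.
  by rewrite lt_def C12N0 conjv_ge0.
case: (ltgtP (a None) 1) => [lt1|gt1|//].
  case: (coherent_no_sure_gain coh act) => w /gainE [-> C12_gt0].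
  by rewrite mulr_gt0 // subr_gt0.
case: (coherent_no_sure_loss coh act) => w /gainE [-> C12_gt0].
by rewrite pmulr_rlt0 // subr_lt0.
Qed.

End QuasiConjunctionIncluded.

Lemma qc_iterated_is_one (A : {set 'I_3}) : concl \in A -> qc_included A ->
  iterated_is_one R E H.
Proof.
by move=> cA qc a coh w; rewrite (itervE coh cA qc) (iterated_prev1 coh cA qc); ring.
Qed.

Lemma witness_dichotomy : p_consistent R E H F12 ->
  all_witnessed \/ exists2 A : {set 'I_3}, concl \in A & qc_included A.
Proof.
move=> pc.
have [allw|] := boolP [forall A : {set 'I_3}, (A != set0) ==> [exists w, witness A w]].
  left=> A A0; move/forallP: allw => /(_ A) /implyP /(_ A0) /existsP.
  by case=> w; exists w.
move=> /forallPn [A]; rewrite negb_imply => /andP [A0 /existsPn nowit].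
have cA : concl \in A.
  apply/negPn/negP => cA.
  have sA : A \subset F12.
    by apply/subsetP => i iA; rewrite premisesE; apply: contraNneq cA => <-.
  by have [w wA] := premises_witnessed pc sA A0; move: (nowit w); rewrite wA.
right; exists A => // w called; move: (nowit w); rewrite /witness called /=.
case/nandP => [/forall_inPn [i iA]|]; last by rewrite cA /= negbK => ->; rewrite orbT.
rewrite negb_imply negbK => /andP [ic Fi].
by apply/orP; left; apply/exists_inP; exists i; rewrite ?ic.
Qed.

End ConditionalEvents.

Unset Implicit Arguments.

Theorem mainTheorem7 (R : realFieldType) (T : finType) (E H : 'I_3 -> {set T}) :
  (forall i, H i != set0) ->
  p_consistent R E H F12 ->
  (p_entails R E H F12 ord_max <-> iterated_is_one R E H).
Proof.
move=> condN0 pc; have [wit|[A cA qc]] := witness_dichotomy pc.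
  by split=> [/(not_p_entails condN0 wit)|/(not_iterated_is_one condN0 wit)].
by split=> _; [exact: qc_iterated_is_one cA qc | exact: qc_p_entails cA qc pc].
Qed.
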